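(* Let $n\ge 2$ and let $S$ be a set of vertices of the hypercube $Q_n$ such that the induced subgraph $Q_n[S]$ has maximum degree at most one. Then, identifying vertices of $Q_n$ with subsets of $[n]$, the collection $V(Q_n)\setminus S$ is the collection of feasible sets of a delta-matroid with ground set $[n]$.
   Context: The $n$-dimensional hypercube $Q_n$ has vertex set $\{0,1\}^n$, two vertices adjacent if they differ in exactly one coordinate; each vertex is identified with the subset of $[n]=\{1,\dots,n\}$ of which it is the indicator vector. A delta-matroid $(E,\mathcal F)$ consists of a finite ground set $E$ and a non-empty collection $\mathcal F$ of subsets of $E$ (the feasible sets) satisfying the symmetric exchange axiom: for all $X,Y\in\mathcal F$ and every $e\in X\triangle Y$ there exists $f\in X\triangle Y$ (possibly $f=e$) with $X\triangle\{e,f\}\in\mathcal F$. *)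

(* Ground set [n] is represented by 'I_n; vertices of Q_n
   are identified with subsets of 'I_n, i.e. elements of {set 'I_n}. *)
From mathcomp Require Import all_boot.
Set Implicit Arguments. Unset Strict Implicit. Unset Printing Implicit Defensive.

Definition symdiff (T : finType) (A B : {set T}) : {set T} := (A :\: B) :|: (B :\: A).

Definition qadj (n : nat) (X Y : {set 'I_n}) : bool := #|symdiff X Y| == 1.

Definition maxdeg_le1 (n : nat) (S : {set {set 'I_n}}) : Prop :=
  forall X, X \in S -> #|[set Y in S | qadj X Y]| <= 1.

Definition is_delta_matroid (T : finType) (F : {set {set T}}) : Prop :=
  F != set0 /\
  forall X Y, X \in F -> Y \in F ->
    forall e, e \in symdiff X Y ->
      exists2 f, f \in symdiff X Y & symdiff X [set e; f] \in F.

From mathcomp Require Import all_boot.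

Set Implicit Arguments.
Unset Strict Implicit.
Unset Printing Implicit Defensive.

(* Fix X, Y outside S and e in X (+) Y, and put Z := X (+) {e}.  The sets
   X (+) {e, f}, for f <> e in X (+) Y, are pairwise distinct neighbours of Z.
   If Z is outside S, exchange e with itself.  Otherwise at most one of these
   neighbours lies in S, so some f works unless X (+) Y has at most two
   elements; but then Y itself is X (+) {e} or X (+) {e, f}.  For
   nonemptiness, the empty set has two neighbours when n >= 2, so S cannot
   contain every vertex. *)

Lemma in_symdiff (T : finType) (A B : {set T}) x :
  (x \in symdiff A B) = (x \in A) (+) (x \in B).
Proof. by rewrite /symdiff !inE; case: (x \in A); case: (x \in B). Qed.

Lemma symdiffK (T : finType) (A B : {set T}) : symdiff A (symdiff A B) = B.
Proof. by apply/setP=> x; rewrite !in_symdiff; case: (x \in A); case: (x \in B). Qed.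

Lemma symdiff_inj (T : finType) (A : {set T}) : injective (symdiff A).
Proof. by move=> B C eqBC; rewrite -(symdiffK A B) eqBC symdiffK. Qed.

Lemma symdiff_set2 (T : finType) (A : {set T}) e f : e != f ->
  symdiff A [set e; f] = symdiff (symdiff A [set e]) [set f].
Proof.
move=> ef; apply/setP=> x; rewrite !in_symdiff !inE.
by case: (eqVneq x e) => [->|_]; rewrite ?(negbTE ef) ?addbF.
Qed.

Lemma qadj_symdiff (n : nat) (X A : {set 'I_n}) :
  qadj X (symdiff X A) = (#|A| == 1).
Proof. by rewrite /qadj symdiffK. Qed.

Lemma qadj_symdiff1 (n : nat) (X : {set 'I_n}) i : qadj X (symdiff X [set i]).
Proof. by rewrite qadj_symdiff cards1. Qed.

Section MaxDegreeOne.

Variables (n : nat) (S : {set {set 'I_n}}).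
Hypothesis degS : maxdeg_le1 S.

Lemma maxdeg_le1_nbr_uniq Z W1 W2 : Z \in S -> W1 \in S -> W2 \in S ->
  qadj Z W1 -> qadj Z W2 -> W1 = W2.
Proof.
move=> ZS W1S W2S adj1 adj2; apply/eqP; apply: contraTT (degS ZS) => W12.
have sub : [set W1; W2] \subset [set Y in S | qadj Z Y].
  by apply/subsetP=> Y; rewrite !inE => /orP[]/eqP->; apply/andP.
by rewrite -ltnNge (leq_trans _ (subset_leq_card sub)) // cards2 W12.
Qed.

Lemma maxdeg_le1_compl_neq0 : 1 < n -> ~: S != set0.
Proof.
move=> n_gt1; have n_gt0 : 0 < n := ltnW n_gt1.
apply/set0Pn; apply/existsP; apply: contraT => /existsPn allS.
have inS X : X \in S by have := allS X; rewrite inE negbK.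
have := maxdeg_le1_nbr_uniq (inS set0) (inS _) (inS _)
  (qadj_symdiff1 _ (Ordinal n_gt0)) (qadj_symdiff1 _ (Ordinal n_gt1)).
by move/symdiff_inj/set1_inj/(congr1 val).
Qed.

Lemma maxdeg_le1_flip2 X e f g : symdiff X [set e] \in S ->
  e != f -> e != g -> symdiff X [set e; f] \in S -> symdiff X [set e; g] \in S ->
  f = g.
Proof.
move=> ZS ef eg; rewrite !symdiff_set2 // => WfS WgS.
apply/set1_inj/symdiff_inj/(maxdeg_le1_nbr_uniq ZS WfS WgS); exact: qadj_symdiff1.
Qed.

Lemma maxdeg_le1_exchange X Y e : X \notin S -> Y \notin S ->
  e \in symdiff X Y ->
  exists2 f, f \in symdiff X Y & symdiff X [set e; f] \notin S.
Proof.
move=> XnS YnS eD; set D := symdiff X Y.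
have YE : Y = symdiff X D by rewrite symdiffK.
have DE : D = e |: (D :\ e) by rewrite setD1K.
case ZS: (symdiff X [set e] \in S); last by exists e; rewrite // setUid ZS.
have [/cards0_eq D'0 | ] := posnP #|D :\ e|.
  by move: YnS; rewrite YE DE D'0 setU0 ZS.
rewrite leq_eqVlt eq_sym => /orP[/cards1P[f D'f] | /card_gt1P[f [g [fD' gD' fg]]]].
  have fD : f \in D by rewrite DE D'f !inE eqxx orbT.
  by exists f; rewrite // -D'f -DE -YE.
move: fD' gD'; rewrite !in_setD1 => /andP[fe fD] /andP[ge gD].
case WfS: (symdiff X [set e; f] \in S); last by exists f; rewrite ?WfS.
case WgS: (symdiff X [set e; g] \in S); last by exists g; rewrite ?WgS.
by rewrite (maxdeg_le1_flip2 ZS _ _ WfS WgS) 1?eq_sym ?eqxx in fg.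
Qed.

End MaxDegreeOne.

Theorem lemma3p4 (n : nat) (hn : 2 <= n) (S : {set {set 'I_n}}) :
  maxdeg_le1 S -> is_delta_matroid (~: S).
Proof.
move=> degS; split; first exact: maxdeg_le1_compl_neq0.
move=> X Y; rewrite !inE => XnS YnS e eD.
have [f fD WnS] := maxdeg_le1_exchange degS XnS YnS eD.
by exists f; rewrite // inE.
Qed.
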